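(* Let $A$ be a ring with Jacobson radical $J$. Then $A$ is left arithmetical and semilocal if and only if $A/J$ is finite and $J$ is finitely generated as a left $A$-module.
   Context: A ring $A$ is called left arithmetical if: (a) every simple left $A$-module has finitely many elements; (b) every simple left $A$-module is finitely presented; (c) for every positive integer $n$, there are only finitely many isomorphism classes of simple left $A$-modules with exactly $n$ elements. A ring $A$ with Jacobson radical $J$ is semilocal if $A/J$ is Artinian (semisimple). *)

From Stdlib Require List.
From HB Require Import structures.
From mathcomp Require Import all_boot all_order all_algebra.
Set Implicit Arguments. Unset Strict Implicit. Unset Printing Implicit Defensive.
Import GRing.Theory.
Local Open Scope ring_scope.

Definition left_ideal (A : pzRingType) (I : A -> Prop) : Prop :=
  [/\ I 0, (forall x y, I x -> I y -> I (x + y)) &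
      (forall a x, I x -> I (a * x))].

Definition maximal_left_ideal (A : pzRingType) (I : A -> Prop) : Prop :=
  [/\ left_ideal I, ~ I 1 &
      (forall K : A -> Prop, left_ideal K -> (forall x, I x -> K x) ->
         ~ K 1 -> forall x, K x -> I x)].

Definition jacobson (A : pzRingType) (x : A) : Prop :=
  forall I : A -> Prop, maximal_left_ideal I -> I x.

Definition quot_jacobson_finite (A : pzRingType) : Prop :=
  exists s : seq A, forall x : A, exists2 y, y \in s & jacobson (x - y).

Definition jacobson_fg (A : pzRingType) : Prop :=
  exists n (g : 'I_n -> A), (forall i, jacobson (g i)) /\
    forall x, jacobson x -> exists c : 'I_n -> A, x = \sum_(i < n) c i * g i.

(* A is semilocal: A/J is (left) Artinian, i.e. DCC on left ideals of A/J,
   equivalently on left ideals of A containing J. *)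
Definition semilocal (A : pzRingType) : Prop :=
  forall I : nat -> A -> Prop,
    (forall k, left_ideal (I k)) ->
    (forall k x, jacobson x -> I k x) ->
    (forall k x, I k.+1 x -> I k x) ->
    exists N, forall k, (N <= k)%N -> forall x, I k x <-> I N x.

Definition submodule (A : pzRingType) (M : lmodType A) (P : M -> Prop) : Prop :=
  [/\ P 0, (forall x y, P x -> P y -> P (x + y)) &
      (forall (a : A) x, P x -> P (a *: x))].

Definition simple_module (A : pzRingType) (M : lmodType A) : Prop :=
  (exists x : M, x != 0) /\
  forall P : M -> Prop, submodule P -> (forall x, P x -> x = 0) \/ (forall x, P x).

Definition has_card (T : eqType) (n : nat) : Prop :=
  exists s : seq T, [/\ uniq s, size s = n & forall x, x \in s].

Definition finite_module (A : pzRingType) (M : lmodType A) : Prop :=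
  exists n, has_card M n.

Definition fin_presented (A : pzRingType) (M : lmodType A) : Prop :=
  exists n (g : 'I_n -> M),
    (forall x : M, exists c : 'rV[A]_n, x = \sum_(i < n) c ord0 i *: g i) /\
    exists m (r : 'I_m -> 'rV[A]_n),
      (forall j, \sum_(i < n) r j ord0 i *: g i = 0) /\
      (forall c : 'rV[A]_n, \sum_(i < n) c ord0 i *: g i = 0 ->
         exists d : 'I_m -> A, c = \sum_(j < m) d j *: r j).

Definition mod_iso (A : pzRingType) (M N : lmodType A) : Prop :=
  exists f : M -> N, [/\ (forall x y, f (x + y) = f x + f y),
                         (forall (a : A) x, f (a *: x) = a *: f x) &
                         bijective f].

Definition left_arithmetical (A : pzRingType) : Prop :=
  [/\ (forall M : lmodType A, simple_module M -> finite_module M),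
      (forall M : lmodType A, simple_module M -> fin_presented M) &
      (forall n : nat, exists Ms : seq (lmodType A),
         forall M : lmodType A, simple_module M -> has_card M n ->
           exists N : lmodType A, List.In N Ms /\ mod_iso M N)].

(* If A/J is finite and J is finitely generated, every simple module is A x
   with J inside the maximal left ideal ann x.  So it is a quotient of A/J,
   hence finite; it is finitely presented because ann x is spanned by J and
   finitely many coset representatives; and it is determined up to
   isomorphism by the set of representatives killing x.  Left ideals containing
   J correspond to subsets of the finite set A/J, which gives semilocality.
   Conversely, for a maximal left ideal m the module A/m is simple, so m has
   finite index, and m is finitely generated since A/m is finitely presented.
   Intersecting repeatedly with a maximal left ideal not containing the current
   ideal gives a descending chain of finitely generated left ideals of finite
   index containing J (for I /\ m use I + m = A).  By semilocality it becomes
   stationary, and then its last term lies in every maximal left ideal, so it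
   is J. *)

From HB Require Import structures.
From mathcomp Require Import all_boot all_order all_algebra.
From mathcomp Require Import boolp.
Set Implicit Arguments. Unset Strict Implicit. Unset Printing Implicit Defensive.
Import GRing.Theory.
Local Open Scope ring_scope.
Local Open Scope quotient_scope.

Section LeftIdeals.
Variable A : pzRingType.
Implicit Types (I K P : A -> Prop) (x y : A).

Lemma left_idealN I x : left_ideal I -> I x -> I (- x).
Proof. by case=> _ _ IM Ix; rewrite -mulN1r; apply: IM. Qed.

Lemma left_idealB I x y : left_ideal I -> I x -> I y -> I (x - y).
Proof. by move=> hI Ix Iy; case: (hI) => _ ID _; apply: ID Ix (left_idealN hI Iy). Qed.

Definition left_span P x := forall K, left_ideal K -> (forall z, P z -> K z) -> K x.

Lemma left_ideal_span P : left_ideal (left_span P).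
Proof.
split=> [K [] //|x y Px Py K hK PK|a x Px K hK PK]; case: (hK) => _ KD KM.
  exact: KD (Px K hK PK) (Py K hK PK).
exact: KM (Px K hK PK).
Qed.

Lemma left_span_sup P x : P x -> left_span P x.
Proof. by move=> Px K _; apply. Qed.

Lemma left_span_idE I : left_ideal I -> left_span I = I.
Proof.
move=> hI; apply/funext => x; apply/propext.
by split=> [|/left_span_sup//]; apply.
Qed.

Lemma left_idealI I K : left_ideal I -> left_ideal K -> left_ideal (fun x => I x /\ K x).
Proof.
case=> I0 ID IM [K0 KD KM]; split=> // [x y [Ix Kx] [Iy Ky]|a x [Ix Kx]].
  by split; [apply: ID | apply: KD].
by split; [apply: IM | apply: KM].
Qed.

Lemma maximal_left_ideal_comax I m x : left_ideal I -> maximal_left_ideal m ->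
  I x -> ~ m x -> exists i n, [/\ I i, m n & i + n = 1].
Proof.
move=> [I0 ID IM] [[m0 mD mM] m1 m_max] Ix mNx.
pose S y := exists i n, [/\ I i, m n & y = i + n].
have S_ideal : left_ideal S.
  split=> [|_ _ [i [n [Ii mn ->]]] [i' [n' [Ii' mn' ->]]]|a _ [i [n [Ii mn ->]]]].
  - by exists 0, 0; rewrite addr0.
  - by exists (i + i'), (n + n'); split; [apply: ID | apply: mD | rewrite addrACA].
  - by exists (a * i), (a * n); split; [apply: IM | apply: mM | rewrite mulrDr].
have mS y : m y -> S y by exists 0, y; rewrite add0r.
have [[i [n [Ii mn e]]]|S1] := pselect (S 1); first by exists i, n.
by case: mNx; apply: (m_max S) => //; exists x, 0; rewrite addr0.
Qed.

Definition left_ideal_fg I := exists n (g : 'I_n -> A), (forall i, I (g i)) /\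
  forall x, I x -> exists c : 'I_n -> A, x = \sum_(i < n) c i * g i.

Definition finite_cosets I := exists s : seq A, forall x, exists2 y, y \in s & I (x - y).

Lemma left_ideal_fg_cat I n1 n2 (g1 : 'I_n1 -> A) (g2 : 'I_n2 -> A) :
    (forall i, I (g1 i)) -> (forall j, I (g2 j)) ->
    (forall x, I x -> exists (c1 : 'I_n1 -> A) (c2 : 'I_n2 -> A),
       x = \sum_(i < n1) c1 i * g1 i + \sum_(j < n2) c2 j * g2 j) ->
  left_ideal_fg I.
Proof.
move=> Ig1 Ig2 Ispan.
pose cat (u : 'I_n1 -> A) (v : 'I_n2 -> A) k := row_mx (\row_i u i) (\row_j v j) ord0 k.
exists (n1 + n2)%N, (cat g1 g2); split.
  move=> k; rewrite /cat; case: (split_ordP k) => j ->; rewrite (row_mxEl, row_mxEr) mxE;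
    [exact: Ig1 | exact: Ig2].
move=> x /Ispan [c1 [c2 ->]]; exists (cat c1 c2).
by rewrite big_split_ord /=; congr (_ + _); apply: eq_bigr => i _;
  rewrite /cat ?row_mxEl ?row_mxEr !mxE.
Qed.

(* As i0 + n0 = 1, right multiplication by n0 (resp. i0) maps I (resp. K)
   into I /\ K, and x = x * n0 + x * i0. *)
Lemma left_ideal_fgI_comax I K i0 n0 : left_ideal I -> left_ideal K ->
    left_ideal_fg I -> left_ideal_fg K -> I i0 -> K n0 -> i0 + n0 = 1 ->
  left_ideal_fg (fun x => I x /\ K x).
Proof.
move=> hI hK [n1 [p [Ip p_span]]] [n2 [q [Kq q_span]]] Ii0 Kn0 e.
have [_ _ IM] := hI; have [_ _ KM] := hK.
have decomp y : y = y * n0 + y * i0 by rewrite -mulrDr addrC e mulr1.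
have mulr_n0 y : y * n0 = y - y * i0 by rewrite {2}[y]decomp addrK.
have mulr_i0 y : y * i0 = y - y * n0 by rewrite {2}[y]decomp addrAC subrr add0r.
apply: (left_ideal_fg_cat (g1 := fun k => p k * n0) (g2 := fun l => q l * i0)).
- move=> k; split; last exact: KM.
  by rewrite mulr_n0; apply: left_idealB; [| apply: Ip | apply: IM].
- move=> l; split; first exact: IM.
  by rewrite mulr_i0; apply: left_idealB; [| apply: Kq | apply: KM].
- move=> x [Ix Kx]; have [a xa] := p_span x Ix; have [b xb] := q_span x Kx.
  exists a, b; rewrite {1}[x]decomp {1}xa {1}xb !mulr_suml.
  by congr (_ + _); apply: eq_bigr => k _; rewrite mulrA.
Qed.

Lemma finite_cosetsI I K : left_ideal I -> left_ideal K ->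
  finite_cosets I -> finite_cosets K -> finite_cosets (fun x => I x /\ K x).
Proof.
move=> hI hK [s Is] [t Kt].
pose both p v := I (v - p.1) /\ K (v - p.2).
have [w w_both] : {w : A * A -> A & forall p, (exists v, both p v) -> both p (w p)}.
  apply: (@choice _ _ (fun p v => (exists v, both p v) -> both p v)) => p.
  by have [[v hv]|nv] := pselect (exists v, both p v); [exists v | exists 0].
exists (map w [seq (y, z) | y <- s, z <- t]) => x.
have [y ys Ixy] := Is x; have [z zt Kxz] := Kt x.
have [Iw Kw] := w_both (y, z) (ex_intro _ x (conj Ixy Kxz)).
exists (w (y, z)); first by apply: map_f; apply: allpairs_f.
have subB (u v c : A) : u - v = (u - c) - (v - c) by rewrite opprB addrA subrK.
by split; [rewrite (subB _ _ y) | rewrite (subB _ _ z)]; apply: left_idealB.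
Qed.

Lemma left_ideal_fg_sup J K : left_ideal K -> (forall x, J x -> K x) ->
  left_ideal_fg J -> finite_cosets J -> left_ideal_fg K.
Proof.
move=> hK JK [n [g [Jg g_span]]] [s Js].
pose t := [seq y <- s | `[< K y >]].
apply: (left_ideal_fg_cat (g1 := fun i : 'I_(size t) => nth 0 t i) (g2 := g)) => [i|j|x Kx].
- by move: (mem_nth 0 (ltn_ord i)); rewrite mem_filter => /andP[/asboolP].
- exact/JK/Jg.
have [y ys Jxy] := Js x; have [c xyc] := g_span _ Jxy.
have Ky : K y by rewrite -[y](subKr x); apply: left_idealB => //; apply: JK.
have yt : (index y t < size t)%N by rewrite index_mem mem_filter ys andbT; apply/asboolP.
exists (fun i => ((i == Ordinal yt)%:R : A)), c.
rewrite -xyc (bigD1 (Ordinal yt)) //= eqxx mul1r nth_index; last by rewrite -index_mem.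
by rewrite big1 ?addr0 ?subrKC // => i /negbTE ->; rewrite mul0r.
Qed.

End LeftIdeals.

Section LeftQuotient.
Variables (A : pzRingType) (P : A -> Prop).

Definition left_span_pred : {pred A} := fun x => `[< left_span P x >].

Lemma left_span_zmod_closed : zmod_closed left_span_pred.
Proof.
have [span0 _ _] := left_ideal_span P.
split=> [|x y]; rewrite unfold_in; first exact/asboolP.
by move=> /asboolP Px /asboolP Py; apply/asboolP; apply: left_idealB (left_ideal_span P) Px Py.
Qed.

HB.instance Definition _ := GRing.isZmodClosed.Build A left_span_pred left_span_zmod_closed.

Definition lquot := {ideal_quot left_span_pred}.
HB.instance Definition _ := ZmodQuotient.on lquot.

Lemma lquot_eqP x y : \pi_lquot x = \pi y <-> left_span P (x - y).
Proof.
split=> [/eqP|/asboolP h]; last by apply/eqP; rewrite -Quotient.idealrBE.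
by rewrite -Quotient.idealrBE => /asboolP.
Qed.

Definition lquot_scale (a : A) (q : lquot) : lquot := \pi_lquot (a * repr q).
Lemma pi_scale a : {morph \pi_lquot : x / a * x >-> lquot_scale a x}.
Proof.
move=> x; apply/lquot_eqP; rewrite -mulrBr; case: (left_ideal_span P) => _ _; apply.
by apply/lquot_eqP; rewrite reprK.
Qed.
Canonical pi_scale_morph a := PiMorph1 (pi_scale a).

Lemma lquot_scaleA a b q : lquot_scale a (lquot_scale b q) = lquot_scale (a * b) q.
Proof. by rewrite -[q]reprK !piE mulrA. Qed.
Lemma lquot_scale1 : left_id 1 lquot_scale.
Proof. by move=> q; rewrite -[q]reprK !piE mul1r. Qed.
Lemma lquot_scaleDr : right_distributive lquot_scale +%R.
Proof. by move=> a q r; rewrite -[q]reprK -[r]reprK !piE mulrDr. Qed.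
Lemma lquot_scaleDl q : {morph lquot_scale^~ q : a b / a + b}.
Proof. by move=> a b; rewrite -[q]reprK !piE mulrDl. Qed.

HB.instance Definition _ :=
  GRing.Zmodule_isLmodule.Build A lquot lquot_scaleA lquot_scale1 lquot_scaleDr lquot_scaleDl.

Lemma pi_lquotZ a x : a *: \pi_lquot x = \pi_lquot (a * x).
Proof. exact/esym/pi_scale. Qed.

Lemma pi_lquot_eq0 x : \pi_lquot x = 0 <-> left_span P x.
Proof. by rewrite -(raddf0 \pi_lquot) lquot_eqP subr0. Qed.

End LeftQuotient.

Lemma simple_lquot (A : pzRingType) (m : A -> Prop) :
  maximal_left_ideal m -> simple_module (lquot m).
Proof.
move=> [m_ideal m1 m_sup]; have piE0 a : \pi_(lquot m) a = 0 <-> m a.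
  by rewrite pi_lquot_eq0 left_span_idE.
split=> [|N [N0 ND NZ]]; first by exists (\pi 1); apply/eqP => /piE0.
pose K a := N (\pi_(lquot m) a).
have K_ideal : left_ideal K.
  split=> [|a b Ka Kb|a b Kb]; rewrite /K ?raddf0 ?raddfD -?pi_lquotZ //.
  - exact: ND.
  - exact: NZ.
have mK a : m a -> K a by rewrite /K => /piE0 ->.
have [K1|K1] := pselect (K 1).
  by right; elim/quotW => a; rewrite -[a]mulr1 -pi_lquotZ; apply: NZ.
by left; elim/quotW => a Ka; apply/piE0; apply: (m_sup K).
Qed.

Lemma finite_cosets_lquot (A : pzRingType) (P : A -> Prop) :
  finite_module (lquot P) -> finite_cosets (left_span P).
Proof.
move=> [n [s [_ _ s_all]]]; exists (map repr s) => x.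
by exists (repr (\pi_(lquot P) x)); [apply: map_f | apply/lquot_eqP; rewrite reprK].
Qed.

(* If A/I is presented by generators pi (a i) and relations r j, then I is
   generated by 1 - S, where pi 1 = pi S with S a combination of the a i, and
   by the lifts u j of the relations: for x in I, x = x (1 - S) + x S and x S
   is a combination of the u j because the coefficients of x S are a relation. *)
Lemma left_ideal_fg_lquot (A : pzRingType) (P : A -> Prop) :
  fin_presented (lquot P) -> left_ideal_fg (left_span P).
Proof.
move=> [n [gq [gq_span [m [r [r_rel r_span]]]]]].
have span_ideal := left_ideal_span P; have [_ _ span_M] := span_ideal.
pose a i := repr (gq i).
have combE (c : 'I_n -> A) : \sum_(i < n) c i *: gq i = \pi_(lquot P) (\sum_(i < n) c i * a i).
  by rewrite raddf_sum; apply: eq_bigr => i _; rewrite -[gq i]reprK pi_lquotZ.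
have [c] := gq_span (\pi_(lquot P) 1); rewrite combE => /lquot_eqP span1S.
set S := \sum_(i < n) _ in span1S.
pose u j := \sum_(i < n) r j ord0 i * a i.
have span_u j : left_span P (u j) by apply/pi_lquot_eq0; rewrite -combE r_rel.
apply: (left_ideal_fg_cat (g1 := fun _ : 'I_1 => 1 - S) (g2 := u)) => // x span_x.
have xS : x * S = x - x * (1 - S) by rewrite mulrBr mulr1 opprB addrC subrK.
pose v : 'rV_n := \row_i (x * c ord0 i).
have xSv : x * S = \sum_(i < n) v ord0 i * a i.
  by rewrite mulr_sumr; apply: eq_bigr => i _; rewrite mxE mulrA.
have [d vd] : exists d : 'I_m -> A, v = \sum_(j < m) d j *: r j.
  apply: r_span; rewrite combE pi_lquot_eq0 -xSv xS.
  by apply: (left_idealB span_ideal span_x); apply: span_M.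
exists (fun _ => x), d; rewrite big_ord1.
have -> : \sum_(j < m) d j * u j = x * S.
  rewrite xSv vd; under [RHS]eq_bigr => i _ do rewrite summxE mulr_suml.
  rewrite exchange_big /=; apply: eq_bigr => j _.
  by rewrite /u mulr_sumr; apply: eq_bigr => i _; rewrite !mxE mulrA.
by rewrite xS addrC subrK.
Qed.

Section Modules.
Variables (A : pzRingType) (M : lmodType A).
Implicit Types (x z : M) (a : A).

Definition ann x a := a *: x = 0.

Definition generator x := forall z, exists a, z = a *: x.

Lemma left_ideal_ann x : left_ideal (ann x).
Proof.
split=> [|a b xa xb|a b xb]; rewrite /ann.
- exact: scale0r.
- by rewrite scalerDl xa xb addr0.
- by rewrite -scalerA xb scaler0.
Qed.

Lemma simple_generator x : simple_module M -> x != 0 -> generator x.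
Proof.
move=> [_ M_simple] x_neq0.
have multiples_sub : submodule (fun z => exists a, z = a *: x).
  split=> [|_ _ [a ->] [b ->]|c _ [a ->]].
  - by exists 0; rewrite scale0r.
  - by exists (a + b); rewrite scalerDl.
  - by exists (c * a); rewrite scalerA.
have [Ax0|//] := M_simple _ multiples_sub.
by move: x_neq0; rewrite (Ax0 x) ?eqxx //; exists 1; rewrite scale1r.
Qed.

Lemma maximal_ann x : simple_module M -> x != 0 -> maximal_left_ideal (ann x).
Proof.
move=> M_simple x_neq0; have [_ M_sub] := M_simple.
split=> [|/eqP|K [K0 KD KM] annK K1 a Ka]; first exact: left_ideal_ann.
  by rewrite /ann scale1r (negbTE x_neq0).
have Kx_sub : submodule (fun z => exists2 k, K k & z = k *: x).
  split=> [|_ _ [k Kk ->] [l Kl ->]|c _ [k Kk ->]].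
  - by exists 0; rewrite ?scale0r.
  - by exists (k + l); rewrite ?scalerDl //; apply: KD.
  - by exists (c * k); rewrite ?scalerA //; apply: KM.
have [Kx0|KxM] := M_sub _ Kx_sub; first by apply: Kx0; exists a.
have [k Kk xk] := KxM x; case: K1.
rewrite -(subrK k 1); apply: KD => //; apply: annK.
by rewrite /ann scalerBl scale1r -xk subrr.
Qed.

Lemma simple_scale_jacobson a z : simple_module M -> jacobson a -> a *: z = 0.
Proof.
move=> M_simple Ja; have [->|z_neq0] := eqVneq z 0; first exact: scaler0.
exact: Ja _ (maximal_ann M_simple z_neq0).
Qed.

Lemma fin_presented_generator x :
  generator x -> left_ideal_fg (ann x) -> fin_presented M.
Proof.
move=> gen_x [m [h [ann_h h_span]]].
exists 1%N, (fun _ => x); split.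
  by move=> z; have [a ->] := gen_x z; exists (const_mx a); rewrite big_ord1 mxE.
exists m, (fun j => const_mx (h j)); split.
  by move=> j; rewrite big_ord1 mxE; apply: ann_h.
move=> c; rewrite big_ord1 => /h_span [d cd]; exists d.
by apply/matrixP => i k; rewrite !ord1 summxE cd; apply: eq_bigr => j _; rewrite !mxE.
Qed.

Lemma mod_iso_lquot x (P : A -> Prop) :
  generator x -> (forall a, left_span P a <-> ann x a) -> mod_iso M (lquot P).
Proof.
move=> gen_x spanP.
pose g (q : lquot P) := repr q *: x.
have g_pi a : g (\pi a) = a *: x.
  by apply/eqP; rewrite -subr_eq0 -scalerBl; apply/eqP/spanP/lquot_eqP; rewrite reprK.
have [e xe] := choice gen_x.
pose f z := \pi_(lquot P) (e z).
have fK : cancel f g by move=> z; rewrite g_pi -xe.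
have gK : cancel g f.
  elim/quotW => a; apply/lquot_eqP/spanP.
  by rewrite /ann scalerBl -xe g_pi subrr.
have gD : {morph g : q r / q + r}.
  by elim/quotW => a; elim/quotW => b; rewrite -raddfD !g_pi scalerDl.
have gZ c : {morph g : q / c *: q}.
  by elim/quotW => a; rewrite pi_lquotZ !g_pi scalerA.
exists f; split; last by exists g.
- by move=> z w; apply: (can_inj gK); rewrite gD !fK.
- by move=> c z; apply: (can_inj gK); rewrite gZ !fK.
Qed.

End Modules.

Section Forward.
Variable A : pzRingType.
Hypotheses (simple_finite : forall M : lmodType A, simple_module M -> finite_module M)
  (simple_fin_presented : forall M : lmodType A, simple_module M -> fin_presented M).
Implicit Types (I m : A -> Prop).

Definition fg_cofinite_above_jacobson I := [/\ left_ideal I,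
  forall x, jacobson x -> I x, finite_cosets I & left_ideal_fg I].

Definition maximal_missing I m := maximal_left_ideal m /\ ~ (forall x, I x -> m x).

Definition shrink I : A -> Prop :=
  if pselect (exists m, maximal_missing I m) is left ex_m
  then fun x => I x /\ sval (cid ex_m) x else I.

Lemma shrink_sub I x : shrink I x -> I x.
Proof. by rewrite /shrink; case: (pselect (exists m, maximal_missing I m)) => // ? []. Qed.

Lemma fg_cofinite_shrink I :
  fg_cofinite_above_jacobson I -> fg_cofinite_above_jacobson (shrink I).
Proof.
rewrite /shrink; case: pselect => // ex_m [I_ideal JI I_cofinite I_fg].
case: (cid ex_m) => m /= [m_max /existsNP[x /not_implyP[Ix mNx]]].
have [m_ideal _ _] := m_max.
have m_simple := simple_lquot m_max; rewrite -(left_span_idE m_ideal).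
split.
- by apply: left_idealI; rewrite ?left_span_idE.
- by move=> y Jy; split; [apply: JI | rewrite left_span_idE //; exact: Jy _ m_max].
- apply: finite_cosetsI => //; first exact: left_ideal_span.
  exact/finite_cosets_lquot/simple_finite.
- have [i [n [Ii mn e]]] := maximal_left_ideal_comax I_ideal m_max Ix mNx.
  apply: (left_ideal_fgI_comax I_ideal (left_ideal_span m) I_fg _ Ii _ e).
    exact/left_ideal_fg_lquot/simple_fin_presented.
  by rewrite left_span_idE.
Qed.

Lemma shrink_fixed I : (forall x, I x -> shrink I x) ->
  forall m, maximal_left_ideal m -> forall x, I x -> m x.
Proof.
rewrite /shrink; case: pselect => [ex_m|no_m] I_shrink m m_max x Ix; last first.
  by apply: contrapT => mNx; apply: no_m; exists m; split=> // /(_ x Ix).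
by case: (cid ex_m) I_shrink => m' /= [_ m'NI] I_shrink; case: m'NI => y /I_shrink[].
Qed.

Lemma finite_jacobson_of_semilocal : semilocal A ->
  quot_jacobson_finite A /\ jacobson_fg A.
Proof.
move=> A_semilocal; pose chain k := iter k shrink (fun _ => True).
have chain_good k : fg_cofinite_above_jacobson (chain k).
  elim: k => [|k IHk]; last exact: fg_cofinite_shrink.
  split=> //; first by exists [:: 0] => x; exists 0; rewrite ?mem_seq1.
  by exists 1%N, (fun _ => 1); split=> // x _; exists (fun _ => x); rewrite big_ord1 mulr1.
have [N chainN] : exists N, forall k, (N <= k)%N -> forall x, chain k x <-> chain N x.
  apply: A_semilocal => [k|k x|k x]; last exact: shrink_sub.
    by case: (chain_good k).
  by case: (chain_good k) => _ + _ _; apply.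
have chainN_jacobson : chain N = @jacobson A.
  apply/funext => x; apply/propext; split; last by case: (chain_good N) => _ + _ _; apply.
  move=> chainNx m m_max; apply: (shrink_fixed _ m_max chainNx) => y.
  exact: (chainN N.+1 (leqnSn N) y).2.
by have [_ _] := chain_good N; rewrite chainN_jacobson.
Qed.

End Forward.

Lemma set_chain_stable (T : finType) (F : nat -> {set T}) :
  (forall k, F k.+1 \subset F k) -> exists N, forall k, (N <= k)%N -> F k = F N.
Proof.
move=> F_dec; have F_mono : {homo F : j k / (j <= k)%N >-> k \subset j}.
  by apply: (homo_leq (f := F) (r := fun X Y => Y \subset X)) => // Y X Z XY YZ;
    apply: subset_trans YZ XY.
have ex_card : exists n, `[< exists k, #|F k| = n >].
  by exists #|F 0|; apply/asboolP; exists 0%N.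
case: (ex_minnP ex_card) => _ /asboolP[N <-] N_min.
exists N => k leNk; apply/eqP; rewrite eqEcard F_mono //=.
by apply: N_min; apply/asboolP; exists k.
Qed.

Lemma In_map (T : eqType) (U : Type) (f : T -> U) (x : T) (s : seq T) :
  x \in s -> List.In (f x) (map f s).
Proof. by elim: s => //= y s IHs; rewrite inE => /orP[/eqP->|/IHs]; [left | right]. Qed.

Section Backward.
Variables (A : pzRingType) (s : seq A).
Hypothesis s_cosets : forall x : A, exists2 y, y \in s & jacobson (x - y).

Lemma semilocal_of_finite_cosets : semilocal A.
Proof.
move=> I I_ideal JI I_dec.
have I_mono : {homo I : j k / (j <= k)%N >-> forall x, k x -> j x}.
  apply: (homo_leq (f := I) (r := fun X Y => forall x, Y x -> X x)) => //.
  by move=> Y X Z XY YZ x /YZ /XY.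
pose F k := [set i : 'I_(size s) | `[< I k (nth 0 s i) >]].
have [N FN] : exists N, forall k, (N <= k)%N -> F k = F N.
  apply: set_chain_stable => k; apply/subsetP => i; rewrite !inE.
  by move=> /asboolP /I_dec /asboolP.
exists N => k leNk x; split; first exact: I_mono.
move=> INx; have [y ys Jxy] := s_cosets x.
have ys' : (index y s < size s)%N by rewrite index_mem.
have Iky : I k y.
  have : Ordinal ys' \in F N.
    rewrite inE /= nth_index //; apply/asboolP.
    by rewrite -[y](subKr x); apply: left_idealB => //; apply: JI.
  by rewrite -(FN k leNk) inE /= nth_index // => /asboolP.
have [_ ID _] := I_ideal k; rewrite -(subrK y x); exact: ID (JI k _ Jxy) Iky.
Qed.

Lemma simple_scale_cosets (M : lmodType A) (x z : M) :
  simple_module M -> x != 0 -> exists2 y, y \in s & z = y *: x.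
Proof.
move=> M_simple x_neq0; have [a ->] := simple_generator M_simple x_neq0 z.
have [y ys Jay] := s_cosets a; exists y => //.
by rewrite -{1}(subrK y a) scalerDl (simple_scale_jacobson _ M_simple Jay) add0r.
Qed.

Lemma finite_simple (M : lmodType A) : simple_module M -> finite_module M.
Proof.
move=> M_simple; have [[x x_neq0] _] := M_simple.
pose t := undup [seq y *: x | y <- s].
exists (size t), t; split=> // [|z]; first exact: undup_uniq.
have [y ys ->] := simple_scale_cosets z M_simple x_neq0.
by rewrite mem_undup; apply: map_f.
Qed.

Lemma fin_presented_simple (M : lmodType A) : jacobson_fg A ->
  simple_module M -> fin_presented M.
Proof.
move=> J_fg M_simple; have [[x x_neq0] _] := M_simple.
apply: (fin_presented_generator (simple_generator M_simple x_neq0)).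
apply: (left_ideal_fg_sup (left_ideal_ann x) _ J_fg); last by exists s.
by move=> a Ja; apply: simple_scale_jacobson.
Qed.

(* A simple module A x is A / ann x, and ann x is spanned by J together with
   the elements of s that kill x: one quotient per subset of s suffices. *)
Lemma simple_iso_classes_finite : exists Ms : seq (lmodType A),
  forall M : lmodType A, simple_module M ->
    exists N : lmodType A, List.In N Ms /\ mod_iso M N.
Proof.
pose P (b : {set 'I_(size s)}) a := jacobson a \/ exists2 i, i \in b & a = nth 0 s i.
exists [seq lquot (P b) : lmodType A | b <- enum {set 'I_(size s)}].
move=> M M_simple; have [[x x_neq0] _] := M_simple.
pose b := [set i : 'I_(size s) | nth 0 s i *: x == 0].
exists (lquot (P b)); split.
  by apply: In_map; rewrite mem_enum.
apply: mod_iso_lquot (simple_generator M_simple x_neq0) _ => a; split.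
  move=> span_a; apply: (span_a _ (left_ideal_ann x)) => z [Jz|[i ib ->]].
    exact: simple_scale_jacobson.
  by move: ib; rewrite inE => /eqP.
have [y ys Jay] := s_cosets a; rewrite /ann -{1 2}(subrK y a) => ann_a.
have [span0 spanD _] := left_ideal_span (P b); apply: spanD; apply: left_span_sup.
  by left.
have yi : (index y s < size s)%N by rewrite index_mem.
right; exists (Ordinal yi); rewrite ?nth_index // inE /= nth_index //.
by rewrite scalerDl (simple_scale_jacobson _ M_simple Jay) add0r in ann_a; rewrite ann_a.
Qed.

End Backward.

Theorem proposition2p2 (A : pzRingType) :
  left_arithmetical A /\ semilocal A <->
  quot_jacobson_finite A /\ jacobson_fg A.
Proof.
split=> [[[finite_simple fp_simple _] A_semilocal]|[[s s_cosets] J_fg]].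
  exact: finite_jacobson_of_semilocal.
split; last exact: semilocal_of_finite_cosets s_cosets.
split=> [M|M|n]; first exact: finite_simple s_cosets M.
  exact: fin_presented_simple s_cosets M J_fg.
have [Ms Ms_iso] := simple_iso_classes_finite s_cosets.
by exists Ms => M M_simple _; apply: Ms_iso.
Qed.
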